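(* (a) If $n\ge 1$, $\mathcal{P}=C_n$ and $L=\mathfrak{g}^{\prec}(\mathcal{P})$, then $b(L)=|Rel_{\overline{C}}(\mathcal{P})|=\frac{(n-1)(n-2)}{2}$. (b) If $n\ge 1$, $\mathcal{P}=\mathbf{2\times n}$ and $L=\mathfrak{g}^{\prec}(\mathcal{P})$, then $b(L)=|Rel_{\overline{C}}(\mathcal{P})|=\frac{(n-1)(3n-4)}{2}$. (c) If $m\ge 2$, $n\ge 1$, $\mathcal{P}=T_m(n)$ and $L=\mathfrak{g}^{\prec}(\mathcal{P})$, then $b(L)=|Rel_{\overline{C}}(\mathcal{P})|=\frac{(n-2)m^{n+1}+(1-n)m^n+m^2}{(m-1)^2}$.
   Context: All Lie algebras are over an algebraically closed field $\mathbf{k}$ of characteristic zero. For a finite poset $\mathcal{P}$, write $x\prec y$ for strict relations; a strict relation $p\prec q$ is covering if there is no $z$ with $p\prec z\prec q$, and $Rel_{\overline{C}}(\mathcal{P})$ is the set of non-covering strict relations. The nilpotent Lie poset algebra $\mathfrak{g}^{\prec}(\mathcal{P})$ is the Lie algebra (under the commutator bracket) of $|\mathcal{P}|\times|\mathcal{P}|$ matrices spanned by the matrix units $E_{p,q}$ with $p\prec q$ (rows and columns indexed by $\mathcal{P}$). The breadth of a Lie algebra $L$ is $b(L)=\max_{x\in L}\operatorname{rank}(\mathrm{ad}_x)$, where $\mathrm{ad}_x=[x,-]$. Posets: $C_n$ is the chain $1\prec 2\prec\cdots\prec n$. $\mathbf{2\times n}$ is the poset on $\{i_j : 1\le i\le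 n,\ 1\le j\le 2\}$ with $i_j\preceq i'_{j'}$ iff $i\le i'$ and $j\le j'$ (product of a 2-chain and an $n$-chain; covering relations $i_j\prec (i+1)_j$ and $i_1\prec i_2$). $T_m(n)$ (for $m\ge 2$) is the rooted complete $m$-ary tree of depth $n$: the poset on $\{i_k : 1\le k\le n,\ 1\le i\le m^{k-1}\}$ whose covering relations are $i_k\prec j_{k+1}$ for $1\le k<n$, $1\le i\le m^{k-1}$ and $m(i-1)+1\le j\le mi$, with the order being the transitive closure of these. *)

From HB Require Import structures.
From mathcomp Require Import all_boot all_order all_algebra.
Set Implicit Arguments. Unset Strict Implicit. Unset Printing Implicit Defensive.
Import GRing.Theory Num.Theory.
Local Open Scope ring_scope.

(* A finite poset is given by a finite type T and its strict order lt. *)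
Section PosetAlgebra.
Variables (K : fieldType) (T : finType) (lt : rel T).

Definition covering (p q : T) : bool :=
  lt p q && [forall z, ~~ (lt p z && lt z q)].
Definition rel_noncovering : {set T * T} :=
  [set pq | lt pq.1 pq.2 && ~~ covering pq.1 pq.2].

Definition Emx (p q : T) : 'M[K]_#|T| := delta_mx (enum_rank p) (enum_rank q).

(* The nilpotent Lie poset algebra g^<(P), as a row space of vectorized
   matrices: spanned by the E_{p,q} with p < q. *)
Definition poset_alg : 'M[K]_(#|{: T * T}|, #|T| * #|T|) :=
  \matrix_(k < #|{: T * T}|)
    (let pq := enum_val k in if lt pq.1 pq.2 then mxvec (Emx pq.1 pq.2) else 0).

Definition in_poset_alg (x : 'M[K]_#|T|) : bool := (mxvec x <= poset_alg)%MS.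

Definition ad (x y : 'M[K]_#|T|) : 'M[K]_#|T| := x *m y - y *m x.

(* rank of ad_x : L -> L = dimension of the image ad_x(L), which is spanned
   by the images of the basis E_{p,q}, p < q. *)
Definition ad_rank (x : 'M[K]_#|T|) : nat :=
  \rank (\matrix_(k < #|{: T * T}|)
    (let pq := enum_val k in
     if lt pq.1 pq.2 then mxvec (ad x (Emx pq.1 pq.2)) else 0)).

Definition breadth_eq (r : nat) : Prop :=
  (exists2 x, in_poset_alg x & ad_rank x = r) /\
  (forall x, in_poset_alg x -> (ad_rank x <= r)%N).
End PosetAlgebra.

(* The chain C_n : 1 < 2 < ... < n  (0-based: 'I_n). *)
Definition chain_lt (n : nat) : rel 'I_n := fun i j => (i < j)%N.

(* 2 x n : elements i_j encoded as (i-1, j-1) in 'I_n * 'I_2, product order. *)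
Definition two_n_lt (n : nat) : rel ('I_n * 'I_2) :=
  fun a b => [&& (a.1 <= b.1)%N, (a.2 <= b.2)%N & a != b].

(* T_m(n): element i_k encoded 0-based as (k-1, i-1), with i-1 < m^(k-1). *)
Definition tree_vert (m n : nat) := {p : 'I_n * 'I_(m ^ n.-1) | (p.2 < m ^ p.1)%N}.
(* covering relations: i_k < j_(k+1) iff m(i-1)+1 <= j <= m i,
   i.e. 0-based (j-1) %/ m = i-1. *)
Definition tree_cover (m n : nat) : rel (tree_vert m n) :=
  fun a b => ((val a).1.+1 == (val b).1) && ((val b).2 %/ m == (val a).2)%N.
Definition tree_lt (m n : nat) : rel (tree_vert m n) :=
  fun a b => connect (@tree_cover m n) a b && (a != b).

From mathcomp Require Import all_boot all_order all_algebra.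
From mathcomp Require Import ring lra zify.
Set Implicit Arguments. Unset Strict Implicit. Unset Printing Implicit Defensive.
Import GRing.Theory Num.Theory.
Local Open Scope ring_scope.

(* For any finite poset P, with L = g^<(P) spanned by the E_{p,q}, p < q:
   - Upper bound.  [x, E_{p,q}] is a combination of E_{a,q} with a < p < q
     and E_{p,b} with p < q < b, all of them non-covering; hence every
     ad_x maps L into the span D of the E_{p,r} with (p,r) non-covering, and
     rank ad_x <= dim D = |Rel_C(P)|.
   - Lower bound.  Suppose a "selector" relation S (contained in <) picks,
     for every non-covering p < r, an element q with S p q, q < r and p the
     only S-predecessor of q.  For x = sum_{S a b} E_{a,b} one gets
     E_{p,r} = [x, E_{q,r}] + sum_{S r b} E_{q,b}, and by induction on the
     size of the up-set of r every E_{p,r} lies in ad_x(L); so rank ad_x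
     = |Rel_C(P)|.
   For the three posets the covering relation itself is such a selector. *)

Section BreadthBounds.
Variables (K : fieldType) (T : finType) (lt : rel T).
Hypothesis lt_irr : irreflexive lt.
Hypothesis lt_trans : transitive lt.

Local Notation N := (rel_noncovering lt).
Local Notation E := (Emx K).

Definition noncov (p r : T) : bool := lt p r && ~~ covering lt p r.

Lemma noncov_trans (a b c : T) : lt a b -> lt b c -> noncov a c.
Proof.
move=> ab bc; rewrite /noncov /covering (lt_trans ab bc) /=.
by apply/negP => /forallP /(_ b); rewrite ab bc.
Qed.

Lemma Emx_mul (a b c d : T) : E a b *m E c d = E a d *+ (b == c).
Proof. by rewrite /Emx mul_delta_mx_cond (inj_eq enum_rank_inj). Qed.

Lemma ad_suml (I : Type) (r : seq I) (P : pred I) (F : I -> 'M[K]_#|T|) Y :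
  ad (\sum_(i <- r | P i) F i) Y = \sum_(i <- r | P i) ad (F i) Y.
Proof. by rewrite /ad mulmx_suml mulmx_sumr -sumrB. Qed.

Lemma adZl a (X Y : 'M[K]_#|T|) : ad (a *: X) Y = a *: ad X Y.
Proof. by rewrite /ad -scalemxAl -scalemxAr scalerBr. Qed.

Lemma sum_pick (V : nmodType) (F : T -> V) q : \sum_b F b *+ (b == q) = F q.
Proof. by rewrite (bigD1 q) //= eqxx big1 ?addr0 // => b /negbTE ->. Qed.

Lemma sum_pick_cond (V : nmodType) (P : pred T) (F : T -> V) q :
  \sum_(b | P b) F b *+ (b == q) = F q *+ P q.
Proof.
rewrite big_mkcond /= -(sum_pick (fun b => F b *+ P b) q).
by apply: eq_bigr => b _; case: (P b); case: (b == q).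
Qed.

Definition noncov_mx : 'M[K]_(#|N|, #|T| * #|T|) :=
  \matrix_(i < #|N|) mxvec (E (enum_val i).1 (enum_val i).2).

Definition noncov_index (i : 'I_#|N|) : 'I_(#|T| * #|T|) :=
  mxvec_index (enum_rank (enum_val i).1) (enum_rank (enum_val i).2).

Lemma noncov_mxE i l : noncov_mx i l = (l == noncov_index i)%:R.
Proof. by rewrite mxE /Emx mxvec_delta mxE. Qed.

Lemma mxvec_index_inj (i i' j j' : 'I_#|T|) :
  mxvec_index i j = mxvec_index i' j' -> i = i' /\ j = j'.
Proof.
move=> h; have := mxvecE (delta_mx i j : 'M[K]_(#|T|, #|T|)) i' j'.
rewrite -h mxvecE !mxE !eqxx /=.
by case: (i' =P i) => [->|_]; case: (j' =P j) => [->|_] //= /eqP;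
  rewrite ?andbF ?mulr0n oner_eq0.
Qed.

Lemma noncov_index_inj : injective noncov_index.
Proof.
move=> i j /mxvec_index_inj [/enum_rank_inj h1 /enum_rank_inj h2].
apply: enum_val_inj; move: h1 h2.
by case: (enum_val i) => a b; case: (enum_val j) => c d /= -> ->.
Qed.

(* The rows of noncov_mx are distinct unit vectors, hence dim D = |N|. *)
Lemma rank_noncov_mx : \rank noncov_mx = #|N|.
Proof.
apply/eqP; rewrite eqn_leq rank_leq_row /=.
have orthonormal : noncov_mx *m noncov_mx^T = 1%:M.
  apply/matrixP => i j; rewrite [LHS]mxE.
  under eq_bigr => l _ do rewrite [noncov_mx^T _ _]mxE !noncov_mxE.
  rewrite (bigD1 (noncov_index i)) //= big1 => [|l /negbTE nl]; last first.
    by rewrite nl mul0r.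
  by rewrite eqxx mul1r addr0 (inj_eq noncov_index_inj) mxE eq_sym.
by rewrite -{1}(mxrank1 K #|N|) -orthonormal mxrankM_maxl.
Qed.

Lemma noncov_sub (p r : T) : noncov p r -> (mxvec (E p r) <= noncov_mx)%MS.
Proof.
move=> h; have Hin : (p, r) \in N by rewrite inE.
apply/(eq_row_sub (enum_rank_in Hin (p, r))).
by rewrite rowK enum_rankK_in.
Qed.

Lemma subr_submx m1 m2 n (A B : 'M[K]_(m1, n)) (C : 'M[K]_(m2, n)) :
  (A <= C)%MS -> (B <= C)%MS -> (A - B <= C)%MS.
Proof. by move=> hA hB; rewrite addmx_sub // -scaleN1r scalemx_sub. Qed.

Lemma ad_noncov_sub x : in_poset_alg lt x ->
  forall p q, lt p q -> (mxvec (ad x (E p q)) <= noncov_mx)%MS.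
Proof.
case/submxP => w hw p q hpq.
have -> : x = vec_mx (w *m poset_alg K lt) by rewrite -hw mxvecK.
rewrite mulmx_sum_row linear_sum ad_suml linear_sum summx_sub // => i _.
rewrite linearZ adZl linearZ scalemx_sub // rowK /=.
case: (enum_val i) => a b /=.
case: ifP => hab; last by rewrite linear0 /ad mul0mx mulmx0 subrr linear0 sub0mx.
rewrite mxvecK /ad !Emx_mul linearB subr_submx //.
  case: (b =P p) => [bp|_]; last by rewrite mulr0n linear0 sub0mx.
  by rewrite mulr1n noncov_sub // (noncov_trans hab) // bp.
case: (q =P a) => [qa|_]; last by rewrite mulr0n linear0 sub0mx.
by rewrite mulr1n noncov_sub // (noncov_trans hpq) // qa.
Qed.

Lemma ad_rank_le x : in_poset_alg lt x -> (@ad_rank K _ lt x <= #|N|)%N.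
Proof.
move=> hx; rewrite /ad_rank -rank_noncov_mx; apply: mxrankS; apply/row_subP => k.
rewrite rowK; case: ifP => h; last by rewrite sub0mx.
exact: ad_noncov_sub.
Qed.

Definition ad_image_mx (x : 'M[K]_#|T|) : 'M[K]_(#|{: T * T}|, #|T| * #|T|) :=
  \matrix_(k < #|{: T * T}|)
    (let pq := enum_val k in
     if lt pq.1 pq.2 then mxvec (ad x (E pq.1 pq.2)) else 0).

Section Selector.
Variable S : rel T.
Hypothesis S_lt : forall a b, S a b -> lt a b.
Hypothesis S_selects : forall p r, noncov p r ->
  exists q, [/\ S p q, lt q r & forall a, S a q -> a = p].

Definition selector_elt : 'M[K]_#|T| := \sum_a \sum_(b | S a b) E a b.

Lemma selector_elt_in : in_poset_alg lt selector_elt.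
Proof.
rewrite /in_poset_alg linear_sum summx_sub // => a _.
rewrite linear_sum summx_sub // => b Sab.
by apply/(eq_row_sub (enum_rank (a, b))); rewrite rowK enum_rankK /= S_lt.
Qed.

Lemma selector_elt_mull q r : selector_elt *m E q r = \sum_a E a r *+ S a q.
Proof.
rewrite mulmx_suml; apply: eq_bigr => a _; rewrite mulmx_suml.
under eq_bigr => b _ do rewrite Emx_mul.
exact: sum_pick_cond.
Qed.

Lemma selector_elt_mulr q r : E q r *m selector_elt = \sum_(b | S r b) E q b.
Proof.
transitivity (\sum_a (\sum_(b | S a b) E q b) *+ (a == r)); last exact: sum_pick.
rewrite mulmx_sumr; apply: eq_bigr => a _.
rewrite mulmx_sumr -sumrMnl; apply: eq_bigr => b _.
by rewrite Emx_mul eq_sym.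
Qed.

Lemma Emx_selector_step p q r : S p q -> (forall a, S a q -> a = p) ->
  E p r = ad selector_elt (E q r) + \sum_(b | S r b) E q b.
Proof.
move=> Spq uniq_p.
rewrite /ad selector_elt_mull selector_elt_mulr subrK.
transitivity (\sum_a E a r *+ (a == p)); first by rewrite sum_pick.
apply: eq_bigr => a _; congr (_ *+ nat_of_bool _).
by apply/idP/idP => [/eqP ->|/uniq_p ->].
Qed.

Lemma noncov_in_image p r : noncov p r ->
  (mxvec (E p r) <= ad_image_mx selector_elt)%MS.
Proof.
suff: forall k r, (#|[set z | lt r z]| < k)%N -> forall p, noncov p r ->
  (mxvec (E p r) <= ad_image_mx selector_elt)%MS by move=> /(_ _ r (ltnSn _) p).
elim=> // k IH {}r hk {}p hpr.
case: (S_selects hpr) => q [Spq ltqr uniq_p].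
rewrite (Emx_selector_step r Spq uniq_p) linearD addmx_sub //.
  by apply/(eq_row_sub (enum_rank (q, r))); rewrite rowK enum_rankK /= ltqr.
rewrite linear_sum summx_sub // => b Srb; apply: IH; last first.
  exact: noncov_trans ltqr (S_lt Srb).
have smaller_upset : [set z | lt b z] \proper [set z | lt r z].
  apply/properP; split.
    by apply/subsetP => z; rewrite !inE; apply: lt_trans (S_lt Srb).
  by exists b; rewrite !inE ?lt_irr // S_lt.
exact: leq_trans (proper_card smaller_upset) hk.
Qed.

Lemma breadth_from_selector : breadth_eq K lt #|N|.
Proof.
split; last exact: ad_rank_le.
exists selector_elt; first exact: selector_elt_in.
apply/eqP; rewrite eqn_leq ad_rank_le ?selector_elt_in //=.
rewrite -{1}rank_noncov_mx; apply: (mxrankS (B := ad_image_mx selector_elt)).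
apply/row_subP => i; rewrite rowK; apply: noncov_in_image.
by have := enum_valP i; rewrite inE.
Qed.
End Selector.

End BreadthBounds.

Lemma card_set_sum (T : finType) (P : pred T) :
  #|[set x | P x]| = (\sum_x (P x : nat))%N.
Proof.
rewrite -sum1_card big_mkcond /=.
by apply: eq_bigr => x _; rewrite inE; case: (P x).
Qed.

Lemma sum_pair (I J : finType) (G : I * J -> nat) :
  (\sum_(p : I * J) G p = \sum_i \sum_j G (i, j))%N.
Proof. by rewrite pair_bigA; apply: eq_bigr => [[i j]] _. Qed.

Lemma sum_ord_lt n c : (\sum_(i < n) ((i < c)%N : nat))%N = minn n c.
Proof.
elim: n => [|n IH]; first by rewrite big_ord0 min0n.
by rewrite big_ord_recr /= IH; case: (ltnP n c) => h /=; lia.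
Qed.

Lemma sum_ord_pred n : (2 * \sum_(j < n) j.-1 = (n - 1) * (n - 2))%N.
Proof.
elim: n => [|n IH]; first by rewrite big_ord0.
by rewrite big_ord_recr /= mulnDr IH; case: n {IH} => [|n] //=; nia.
Qed.

Lemma sum_ord n : (2 * \sum_(j < n) j = n * (n - 1))%N.
Proof.
elim: n => [|n IH]; first by rewrite big_ord0.
by rewrite big_ord_recr /= mulnDr IH; case: n {IH} => [|n] //=; nia.
Qed.

Lemma count_gap2_pairs n :
  (\sum_(i < n) \sum_(j < n) ((i.+1 < j)%N : nat) = \sum_(j < n) j.-1)%N.
Proof.
rewrite exchange_big /=; apply: eq_bigr => j _.
rewrite (eq_bigr (fun i : 'I_n => ((i < j.-1)%N : nat))); last first.
  by move=> i _; case: j => [[|j]].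
by rewrite sum_ord_lt; apply/minn_idPr; case: j => [[|j]] /=; lia.
Qed.

Lemma count_lt_pairs n :
  (\sum_(i < n) \sum_(j < n) ((i < j)%N : nat) = \sum_(j < n) j)%N.
Proof.
rewrite exchange_big /=; apply: eq_bigr => j _.
by rewrite sum_ord_lt; apply/minn_idPr; apply: ltnW.
Qed.

Lemma half_nat (Q E : nat) : (2 * Q = E)%N -> (Q%:R : rat) = E%:R / 2.
Proof. by move=> h; rewrite -h natrM; field. Qed.

Section Chain.
Variable n : nat.

Lemma chain_irr : irreflexive (@chain_lt n).
Proof. by move=> i; rewrite /chain_lt ltnn. Qed.

Lemma chain_trans : transitive (@chain_lt n).
Proof. by move=> j i k; rewrite /chain_lt; apply: ltn_trans. Qed.

Lemma chain_noncov (i j : 'I_n) : noncov (@chain_lt n) i j = (i.+1 < j)%N.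
Proof.
apply/idP/idP.
  case/andP => hij; rewrite /covering hij /= => /forallPn [z].
  by rewrite negbK /chain_lt => /andP [iz zj]; apply: leq_ltn_trans iz zj.
move=> h; have hij : (i < j)%N by apply: ltnW.
rewrite /noncov /covering /chain_lt hij /=; apply/forallPn.
by exists (Ordinal (ltn_trans h (ltn_ord j))); rewrite negbK /= ltnSn h.
Qed.

Lemma chain_count : #|rel_noncovering (@chain_lt n)| = (\sum_(j < n) j.-1)%N.
Proof.
have -> : rel_noncovering (@chain_lt n) =
          [set x : 'I_n * 'I_n | (x.1.+1 < x.2)%N].
  by apply/setP => x; rewrite !inE -chain_noncov.
by rewrite card_set_sum sum_pair count_gap2_pairs.
Qed.

Lemma chain_breadth (K : fieldType) :
  breadth_eq K (@chain_lt n) #|rel_noncovering (@chain_lt n)|.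
Proof.
apply: (@breadth_from_selector K _ _ chain_irr chain_trans
          (fun i j : 'I_n => i.+1 == j :> nat)).
  by move=> a b /eqP h; rewrite /chain_lt -h.
move=> p r; rewrite chain_noncov => h.
exists (Ordinal (ltn_trans h (ltn_ord r))); split => //=.
by move=> a /eqP [] /val_inj.
Qed.

Lemma chain_count_closed : (1 <= n)%N ->
  (#|rel_noncovering (@chain_lt n)|%:R : rat) = ((n%:R - 1) * (n%:R - 2)) / 2.
Proof.
rewrite chain_count; case: n => [|[|l]] // _.
  by rewrite big_ord_recr big_ord0 /= subrr !mul0r.
rewrite (half_nat (sum_ord_pred _)) /= subn1 /= subn2 /= natrM.
by rewrite -[l.+2]addn2 -[l.+1]addn1 !natrD; field.
Qed.
End Chain.

Section TwoByN.
Variable n : nat.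
Local Notation P := ('I_n * 'I_2)%type.

Lemma pairE (a b : P) : (a == b) = (a.1 == b.1 :> nat) && (a.2 == b.2 :> nat).
Proof. by case: a b => [i s] [j t]. Qed.

Lemma two_irr : irreflexive (@two_n_lt n).
Proof. by move=> a; rewrite /two_n_lt eqxx !andbF. Qed.

Lemma two_trans : transitive (@two_n_lt n).
Proof.
move=> b a c; rewrite /two_n_lt !pairE.
by move=> /and3P [h1 h2 h3] /and3P [h4 h5 h6]; apply/and3P; split; lia.
Qed.

Definition two_noncov_cond (a b : P) : bool :=
  (a.2 <= b.2)%N &&
  (if a.2 == b.2 :> nat then (a.1.+1 < b.1)%N else (a.1 < b.1)%N).

Lemma two_noncov (a b : P) : noncov (@two_n_lt n) a b = two_noncov_cond a b.
Proof.
case: a b => [i s] [j t]; rewrite /two_noncov_cond /=.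
have s2 := ltn_ord s; have t2 := ltn_ord t; have jn := ltn_ord j.
apply/idP/idP.
  case/andP => hij; rewrite /covering hij /= => /forallPn [[z u]].
  rewrite negbK /two_n_lt !pairE /= => /andP [/and3P [h1 h2 h3] /and3P [h4 h5 h6]].
  move: hij; rewrite /two_n_lt pairE /= => /and3P [h7 h8 h9].
  have u2 := ltn_ord u.
  by apply/andP; split => //; case: eqP => e; lia.
move=> /andP [st h].
have hab : two_n_lt (i, s) (j, t).
  by rewrite /two_n_lt pairE /= st; move: h; case: eqP => e h; apply/andP; split; lia.
rewrite /noncov /covering hab /=; apply/forallPn.
move: h; case: eqP => e h.
  exists (Ordinal (ltn_trans h jn), s); rewrite negbK /two_n_lt !pairE /=.
  by apply/andP; split; apply/and3P; split; lia.
exists (j, s); rewrite negbK /two_n_lt !pairE /=.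
by apply/andP; split; apply/and3P; split; lia.
Qed.

Lemma two_count : #|rel_noncovering (@two_n_lt n)| =
  (2 * \sum_(j < n) j.-1 + \sum_(j < n) j)%N.
Proof.
have -> : rel_noncovering (@two_n_lt n) =
          [set x : P * P | two_noncov_cond x.1 x.2].
  by apply/setP => x; rewrite !inE -two_noncov.
rewrite card_set_sum sum_pair.
under eq_bigr => a _ do rewrite sum_pair.
rewrite sum_pair.
under eq_bigr => i _ do rewrite exchange_big.
rewrite -count_gap2_pairs -count_lt_pairs big_distrr -big_split /=.
apply: eq_bigr => i _; rewrite big_distrr -big_split /=; apply: eq_bigr => j _.
rewrite !big_ord_recr !big_ord0 /= /two_noncov_cond /=.
by case: (ltnP i j) => h; case: (ltnP i.+1 j) => h'; lia.
Qed.

Lemma two_breadth (K : fieldType) :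
  breadth_eq K (@two_n_lt n) #|rel_noncovering (@two_n_lt n)|.
Proof.
apply: (@breadth_from_selector K _ _ two_irr two_trans
  (fun a b : P => (a.2 == b.2 :> nat) && (a.1.+1 == b.1 :> nat))).
  move=> [i s] [j t] /= /andP [/eqP e1 /eqP e2].
  by rewrite /two_n_lt pairE /=; apply/and3P; split; lia.
move=> [i s] [j t]; rewrite two_noncov /two_noncov_cond /= => /andP [st h].
have hi : (i.+1 < n)%N.
  by move: h; case: eqP => _ h; apply: leq_ltn_trans (ltn_ord j); lia.
exists (Ordinal hi, s); split => /=.
- by rewrite !eqxx.
- by rewrite /two_n_lt pairE /=; move: h; case: eqP => e h; apply/and3P; split; lia.
- move=> [k u] /= /andP [/eqP e1 /eqP e2]; apply/eqP; rewrite pairE /=.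
  by apply/andP; split; apply/eqP; lia.
Qed.

Lemma two_count_closed : (1 <= n)%N ->
  (#|rel_noncovering (@two_n_lt n)|%:R : rat)
    = ((n%:R - 1) * (3 * n%:R - 4)) / 2.
Proof.
rewrite two_count; case: n => [|[|l]] // _.
  by rewrite !big_ord_recr !big_ord0 /= subrr !mul0r.
have h : (2 * (2 * \sum_(j < l.+2) j.-1 + \sum_(j < l.+2) j)
          = 2 * (l.+1 * l) + l.+2 * l.+1)%N.
  by have := sum_ord_pred l.+2; have := sum_ord l.+2; lia.
rewrite (half_nat h) natrD !natrM.
by rewrite -[l.+2]addn2 -[l.+1]addn1 !natrD; field.
Qed.
End TwoByN.

Local Close Scope ring_scope.

Section Tree.
Variables m n : nat.
Hypothesis m_gt1 : 1 < m.
Local Notation V := (tree_vert m n).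
Local Notation cov := (@tree_cover m n).
Local Notation tlt := (@tree_lt m n).

(* Level (depth - 1) and position (index - 1) of a vertex of T_m(n). *)
Definition lev (a : V) : nat := (val a).1.
Definition idx (a : V) : nat := (val a).2.

Lemma m_gt0 : 0 < m. Proof. exact: ltnW. Qed.
Lemma idx_lt a : idx a < m ^ lev a. Proof. exact: valP a. Qed.
Lemma lev_lt a : lev a < n. Proof. exact: ltn_ord. Qed.

Lemma vertE (a b : V) : (a == b) = (lev a == lev b) && (idx a == idx b).
Proof. by rewrite -val_eqE; case: a b => [[i j] ?] [[k l] ?]. Qed.

Lemma coverE (a b : V) : cov a b = ((lev a).+1 == lev b) && (idx b %/ m == idx a).
Proof. by []. Qed.

Lemma cover_path_end s (a : V) : path cov a s ->
  lev (last a s) = lev a + size s /\ idx (last a s) %/ m ^ size s = idx a.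
Proof.
elim: s a => [|b s IH] a /=; first by rewrite addn0 expn0 divn1.
case/andP => /andP [/eqP h1 /eqP h2] /IH [e1 e2]; split.
  by rewrite e1; move: h1; rewrite /lev; lia.
by rewrite expnSr divnMA e2 h2.
Qed.

Lemma anc_lev_lt b d : lev b - d < n.
Proof. exact: leq_ltn_trans (leq_subr d _) (lev_lt b). Qed.
Lemma anc_idx_lt b d : idx b %/ m ^ d < m ^ n.-1.
Proof. exact: leq_ltn_trans (leq_div _ _) (ltn_ord _). Qed.
Lemma anc_valid b d : idx b %/ m ^ d < m ^ (lev b - d).
Proof.
rewrite ltn_divLR ?expn_gt0 ?m_gt0 // -expnD; apply: leq_trans (idx_lt b) _.
by rewrite leq_exp2l //; lia.
Qed.

(* The ancestor of b, d levels up (the root if d exceeds the level of b). *)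
Definition anc (b : V) (d : nat) : V :=
  exist _ (Ordinal (anc_lev_lt b d), Ordinal (anc_idx_lt b d)) (anc_valid b d).

Lemma lev_anc b d : lev (anc b d) = lev b - d. Proof. by []. Qed.
Lemma idx_anc b d : idx (anc b d) = idx b %/ m ^ d. Proof. by []. Qed.

Lemma anc_connect b d : d <= lev b -> connect cov (anc b d) b.
Proof.
elim: d => [|d IH] h.
  have -> : anc b 0 = b.
    by apply/eqP; rewrite vertE lev_anc idx_anc subn0 expn0 divn1 !eqxx.
  exact: connect0.
apply: connect_trans (IH (ltnW h)); apply: connect1.
by rewrite coverE !lev_anc !idx_anc expnSr divnMA eqxx andbT; apply/eqP; lia.
Qed.

Lemma connect_tree a b : connect cov a b =
  (lev a <= lev b) && (idx b %/ m ^ (lev b - lev a) == idx a).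
Proof.
apply/idP/idP.
  case/connectP => s hp ->; have [e1 e2] := cover_path_end hp.
  by rewrite e1 leq_addr addKn e2 eqxx.
case/andP => hl /eqP hi.
have -> : a = anc b (lev b - lev a).
  by apply/eqP; rewrite vertE lev_anc idx_anc hi eqxx andbT; apply/eqP; lia.
exact/anc_connect/leq_subr.
Qed.

Lemma tree_ltE a b : tlt a b =
  (lev a < lev b) && (idx b %/ m ^ (lev b - lev a) == idx a).
Proof.
rewrite /tree_lt connect_tree vertE.
case: (ltngtP (lev a) (lev b)) => h //=; first by rewrite andbT.
by rewrite h subnn expn0 divn1 eq_sym; case: (idx a == idx b).
Qed.

Lemma tree_irr : irreflexive tlt.
Proof. by move=> a; rewrite /tree_lt eqxx andbF. Qed.

Lemma tree_trans : transitive tlt.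
Proof.
move=> b a c; rewrite !tree_ltE => /andP [h1 /eqP e1] /andP [h2 /eqP e2].
rewrite (ltn_trans h1 h2) /=.
have -> : lev c - lev a = (lev c - lev b) + (lev b - lev a) by lia.
by rewrite expnD divnMA e2 e1.
Qed.

Lemma cover_lt a b : cov a b -> tlt a b.
Proof.
rewrite coverE tree_ltE => /andP [/eqP h1 /eqP h2].
by rewrite -h1 ltnSn subSnn expn1 h2 eqxx.
Qed.

(* For a < b two or more levels apart, the child of a on the way to b. *)
Definition next_on_path (a b : V) : V := anc b (lev b - (lev a).+1).

Lemma next_on_pathP a b : (lev a).+1 < lev b ->
  idx b %/ m ^ (lev b - lev a) = idx a ->
  cov a (next_on_path a b) /\ tlt (next_on_path a b) b.
Proof.
move=> h hi; rewrite /next_on_path coverE tree_ltE lev_anc idx_anc.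
have -> : lev b - (lev b - (lev a).+1) = (lev a).+1 by lia.
rewrite eqxx /= -divnMA -expnSr.
have -> : (lev b - (lev a).+1).+1 = lev b - lev a by lia.
by rewrite hi eqxx; split => //; apply/andP; split => //; lia.
Qed.

Lemma tree_noncov a b : noncov tlt a b =
  ((lev a).+1 < lev b) && (idx b %/ m ^ (lev b - lev a) == idx a).
Proof.
apply/idP/idP.
  case/andP => hlt; rewrite /covering hlt /= => /forallPn [z].
  rewrite negbK !tree_ltE => /andP [/andP [h1 _] /andP [h2 _]].
  move: hlt; rewrite tree_ltE => /andP [_ ->]; rewrite andbT.
  exact: leq_ltn_trans h1 h2.
case/andP => h /eqP hi; have [c1 c2] := next_on_pathP h hi.
have hab : tlt a b by apply: tree_trans (cover_lt c1) c2.
rewrite /noncov /covering hab /=; apply/forallPn; exists (next_on_path a b).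
by rewrite negbK (cover_lt c1) c2.
Qed.

(* Selector: the covering relation (each vertex has a unique parent). *)
Lemma tree_breadth (K : fieldType) : breadth_eq K tlt #|rel_noncovering tlt|.
Proof.
apply: (@breadth_from_selector K _ _ tree_irr tree_trans cov); first exact: cover_lt.
move=> p r; rewrite tree_noncov => /andP [h /eqP hi].
have [c1 c2] := next_on_pathP h hi.
exists (next_on_path p r); split => // a ca.
move: ca c1; rewrite !coverE => /andP [/eqP e1 /eqP e2] /andP [/eqP e3 /eqP e4].
apply/eqP; rewrite vertE; apply/andP; split; apply/eqP; last by rewrite -e2 -e4.
by move: e1 e3; rewrite /lev; lia.
Qed.

Lemma count_window c : \sum_(d < n) (2 <= d <= c : nat) = minn n c.+1 - 2.
Proof.
elim: n => [|k IH]; first by rewrite big_ord0.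
rewrite big_ord_recr /= IH.
by case: (leqP 2 k) => h1; case: (leqP k c) => h2 /=; lia.
Qed.

(* Each vertex b has exactly lev b - 1 non-covering predecessors: its
   ancestors 2, ..., lev b levels up. *)
Lemma card_noncov_below b : #|[set a | noncov tlt a b]| = (lev b).-1.
Proof.
pose D := [set d : 'I_n | 2 <= d <= lev b].
have -> : [set a | noncov tlt a b] = (fun d : 'I_n => anc b d) @: D.
  apply/setP => a; rewrite inE tree_noncov; apply/idP/imsetP.
    case/andP => h /eqP hi.
    exists (Ordinal (anc_lev_lt b (lev a))).
      by rewrite inE /=; apply/andP; split; have := lev_lt b; lia.
    by apply/eqP; rewrite vertE lev_anc idx_anc /= subKn ?hi ?eqxx //; lia.
  case=> d; rewrite inE => /andP [d1 d2] ->.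
  rewrite lev_anc idx_anc subKn // eqxx andbT; lia.
rewrite card_in_imset; last first.
  move=> d1 d2; rewrite !inE => /andP [_ h1] /andP [_ h2] /(congr1 lev).
  by rewrite !lev_anc => e; apply: val_inj => /=; lia.
by rewrite card_set_sum count_window; have := lev_lt b; lia.
Qed.

Lemma sum_sig (X : finType) (P : pred X) (F : X -> nat) :
  \sum_(x : {x | P x}) F (val x) = \sum_(x | P x) F x.
Proof.
rewrite (reindex_omap (val : {x | P x} -> X) insub); last first.
  by move=> i Pi; rewrite insubT.
apply: eq_bigl => -[i Pi] /=; rewrite insubT /= Pi.
by apply/esym/eqP; congr Some; apply: val_inj.
Qed.

(* Level k has m^k vertices, each with k - 1 non-covering predecessors. *)
Lemma tree_count : #|rel_noncovering tlt| = \sum_(k < n) k.-1 * m ^ k.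
Proof.
have -> : rel_noncovering tlt = [set x : V * V | noncov tlt x.1 x.2].
  by apply/setP => x; rewrite !inE.
rewrite card_set_sum sum_pair exchange_big /=.
under eq_bigr => b _ do rewrite -card_set_sum card_noncov_below.
rewrite (@sum_sig _ _ (fun x : 'I_n * 'I_(m ^ n.-1) => x.1.-1)).
rewrite big_mkcond sum_pair; apply: eq_bigr => k _.
rewrite (eq_bigr (fun i : 'I_(m ^ n.-1) => k.-1 * (i < m ^ k))); last first.
  by move=> i _ /=; case: ifP; rewrite ?muln1 ?muln0.
rewrite -big_distrr sum_ord_lt; congr (_ * _); apply/minn_idPr.
by rewrite leq_exp2l //; have := ltn_ord k; lia.
Qed.
End Tree.

Local Open Scope ring_scope.

Lemma tree_sum_closed (m n : nat) :
  ((\sum_(k < n.+1) k.-1 * m ^ k)%N%:R : rat) * (m%:R - 1) ^+ 2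
  = (n%:R - 1) * m%:R ^+ n.+2 - n%:R * m%:R ^+ n.+1 + m%:R ^+ 2.
Proof.
elim: n => [|n IH]; first by rewrite big_ord_recr big_ord0 /=; ring.
rewrite big_ord_recr /= natrD mulrDl IH natrM natrX -[n.+1]addn1 natrD.
by rewrite !exprS; ring.
Qed.

Lemma tree_count_closed m n : (2 <= m)%N -> (1 <= n)%N ->
  (#|rel_noncovering (@tree_lt m n)|%:R : rat)
   = ((n%:R - 2) * m%:R ^+ n.+1 + (1 - n%:R) * m%:R ^+ n + m%:R ^+ 2)
     / (m%:R - 1) ^+ 2.
Proof.
move=> hm; case: n => [|k] // _; rewrite tree_count //.
have hnz : (m%:R - 1) ^+ 2 != 0 :> rat.
  by rewrite expf_neq0 // subr_eq0 (eqr_nat rat m 1); case: m hm => [|[|]].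
rewrite -(mulfK hnz (_%:R)) tree_sum_closed; congr (_ / _).
by rewrite -[k.+1]addn1 natrD; ring.
Qed.

Theorem theorem2 (K : closedFieldType) (HK : [pchar K] =i pred0) :
  (forall n : nat, (1 <= n)%N ->
     breadth_eq K (@chain_lt n) #|rel_noncovering (@chain_lt n)| /\
     (#|rel_noncovering (@chain_lt n)|%:R : rat)
       = ((n%:R - 1) * (n%:R - 2)) / 2) /\
  (forall n : nat, (1 <= n)%N ->
     breadth_eq K (@two_n_lt n) #|rel_noncovering (@two_n_lt n)| /\
     (#|rel_noncovering (@two_n_lt n)|%:R : rat)
       = ((n%:R - 1) * (3 * n%:R - 4)) / 2) /\
  (forall m n : nat, (2 <= m)%N -> (1 <= n)%N ->
     breadth_eq K (@tree_lt m n) #|rel_noncovering (@tree_lt m n)| /\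
     (#|rel_noncovering (@tree_lt m n)|%:R : rat)
       = ((n%:R - 2) * m%:R ^+ n.+1 + (1 - n%:R) * m%:R ^+ n + m%:R ^+ 2)
         / (m%:R - 1) ^+ 2).
Proof.
split; first by move=> n hn; split; [exact: chain_breadth | exact: chain_count_closed].
split; first by move=> n hn; split; [exact: two_breadth | exact: two_count_closed].
by move=> m n hm hn; split; [exact: tree_breadth | exact: tree_count_closed].
Qed.
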